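(* If $\mathcal{A}$ and $\mathcal{B}$ are leaktight probabilistic automata over the same alphabet, then their synchronised product $\mathcal{A}\times\mathcal{B}$ is leaktight.
   Context: Fix a finite alphabet $A$. Here a probabilistic automaton (ignoring initial and final states, which play no role) is a pair $(Q,\Delta)$ with $Q$ finite and $\Delta:Q\times A\to\mathcal{D}(Q)$. For $a\in A$ let $M_a(s,t)=\Delta(s,a)(t)$, for $u=a_0\cdots a_{n-1}$ let $M_u=M_{a_0}\cdots M_{a_{n-1}}$ (identity for the empty word), and $\mathbb{P}(s\xrightarrow{u}t)=M_u(s,t)$. A nonnegative $Q\times Q$ matrix $M$ is idempotent if $M(s,t)>0\iff M^2(s,t)>0$ for all $s,t$; a word $u$ is idempotent if $M_u$ is. A leak is a sequence $(u_n)$ of idempotent words such that $M_{u_n}$ converges to an idempotent matrix $M$ and there exist states $r,q$, both recurrent in the Markov chain with transition matrix $M$, with $\lim_n\mathbb{P}(r\xrightarrow{u_n}q)=0$ and $\mathbb{P}(r\xrightarrow{u_n}q)>0$ for all $n$; the automaton is leaktight if it has no leak. For $\mathcal{A}=(Q^{\mathcal{A}},\Delta^{\mathcal{A}})$ and $\mathcal{B}=(Q^{\mathcal{B}},\Delta^{\mathcal{B}})$, the synchronised product is $\mathcal{A}\times\mathcal{B}=(Q^{\mathcal{A}}\times Q^{\mathcal{B}},\Delta)$ where $\Delta((q,p),a)$ is the product distribution $\Delta((q,p),a)(q',p')=\Delta^{\mathcal{A}}(q,a)(q')\cdot\Delta^{\mathcal{B}}(p,a)(p')$. *)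

From HB Require Import structures.
From mathcomp Require Import all_boot all_order all_algebra.
From mathcomp Require Import all_classical all_reals topology normedtype sequences.
Set Implicit Arguments. Unset Strict Implicit. Unset Printing Implicit Defensive.
Import Order.TTheory GRing.Theory Num.Theory.
Import numFieldNormedType.Exports.
Local Open Scope classical_set_scope.
Local Open Scope ring_scope.

Section PA.
Variables (R : realType) (A : finType).

Record pa := PA {
  pa_state : finType;
  pa_delta : pa_state -> A -> pa_state -> R;
  pa_delta_ge0 : forall s a t, 0 <= pa_delta s a t;
  pa_delta_sum : forall s a, \sum_t pa_delta s a t = 1 }.

Definition mx (Q : finType) := Q -> Q -> R.
Definition mxmul (Q : finType) (M N : mx Q) : mx Q :=
  fun s t => \sum_r M s r * N r t.
Definition mxid (Q : finType) : mx Q := fun s t => (s == t)%:R.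

Definition letter_mx (P : pa) (a : A) : mx (pa_state P) :=
  fun s t => pa_delta s a t.
Definition word_mx (P : pa) (u : seq A) : mx (pa_state P) :=
  foldr (fun a M => @mxmul (pa_state P) (@letter_mx P a) M) (@mxid (pa_state P)) u.

Definition idempotent (Q : finType) (M : mx Q) : Prop :=
  forall s t, 0 < M s t <-> 0 < mxmul M M s t.

Definition mx_rel (Q : finType) (M : mx Q) : rel Q := fun s t => 0 < M s t.

Definition recurrent (Q : finType) (M : mx Q) (s : Q) : Prop :=
  forall t, connect (mx_rel M) s t -> connect (mx_rel M) t s.

Definition leak (P : pa) (u : nat -> seq A) : Prop :=
  (forall n, idempotent (@word_mx P (u n))) /\
  exists M : mx (pa_state P),
    (forall s t, (fun n => @word_mx P (u n) s t) @ \oo --> M s t) /\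
    idempotent M /\
    exists r q : pa_state P,
      recurrent M r /\ recurrent M q /\
      (fun n => @word_mx P (u n) r q) @ \oo --> (0 : R) /\
      (forall n, 0 < @word_mx P (u n) r q).

Definition leaktight (P : pa) : Prop := forall u, ~ leak P u.

Definition prod_delta (P1 P2 : pa) (s : (pa_state P1 * pa_state P2)%type) (a : A)
    (t : (pa_state P1 * pa_state P2)%type) : R :=
  pa_delta s.1 a t.1 * pa_delta s.2 a t.2.

Lemma prod_delta_ge0 (P1 P2 : pa) s a t : 0 <= @prod_delta P1 P2 s a t.
Proof. by rewrite /prod_delta mulr_ge0 // pa_delta_ge0. Qed.

Lemma prod_delta_sum (P1 P2 : pa) s a : \sum_t @prod_delta P1 P2 s a t = 1.
Proof.
rewrite /prod_delta -(pair_big xpredT xpredT (fun i j => pa_delta s.1 a i * pa_delta s.2 a j)) /=.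
under eq_bigr => i _ do rewrite -mulr_sumr pa_delta_sum mulr1.
by rewrite pa_delta_sum.
Qed.

Definition prod_pa (P1 P2 : pa) : pa :=
  @PA (pa_state P1 * pa_state P2)%type (@prod_delta P1 P2)
      (@prod_delta_ge0 P1 P2) (@prod_delta_sum P1 P2).

End PA.

From Pilot Require Import Defs.
From mathcomp Require Import all_boot all_order all_algebra.
From mathcomp Require Import all_classical all_reals topology normedtype sequences.
Set Implicit Arguments. Unset Strict Implicit. Unset Printing Implicit Defensive.
Import Order.TTheory GRing.Theory Num.Theory.
Import numFieldNormedType.Exports.
Local Open Scope classical_set_scope.
Local Open Scope ring_scope.

(* The word matrices of A x B are Kronecker products of those of A and B:
   the product chain runs the two factor chains independently, so an entry
   is positive iff both factor entries are and, the factors being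
   stochastic, every path of one factor lifts to a path of the product.
   Hence idempotence and recurrence pass from the product to each factor.
   Along a leak of A x B each factor converges (its entries are row sums
   of entries of the product), so the limit splits as M1 (x) M2; the
   vanishing entry of the limit makes an entry of M1 or of M2 vanish, which
   yields a leak of A or of B. *)

Section RelationProjection.
Variables (T T' : finType) (e : rel T) (e' : rel T') (f : T' -> T).

Lemma connect_homo :
  (forall x y, e' x y -> e (f x) (f y)) ->
  forall x y, connect e' x y -> connect e (f x) (f y).
Proof.
move=> homo_f x y /connectP[p p_path ->] {y}.
elim: p x p_path => [|z p IHp] x /=; first by rewrite connect0.
by case/andP=> /homo_f exz /IHp; apply: connect_trans; apply: connect1.
Qed.

Lemma connect_lift :
  (forall x' y, e (f x') y -> exists2 y', f y' = y & e' x' y') ->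
  forall x' y, connect e (f x') y -> exists2 y', f y' = y & connect e' x' y'.
Proof.
move=> lift_f x' y /connectP[p p_path ->] {y}.
elim: p x' p_path => [|z p IHp] x' /=; first by exists x'.
case/andP=> /lift_f[z' <- ex'z'] /IHp[y' <- cz'y'].
by exists y' => //; apply: connect_trans cz'y'; apply: connect1.
Qed.

Lemma recurrent_proj (x' : T') :
  (forall x y, e' x y -> e (f x) (f y)) ->
  (forall x' y, e (f x') y -> exists2 y', f y' = y & e' x' y') ->
  (forall y', connect e' x' y' -> connect e' y' x') ->
  forall y, connect e (f x') y -> connect e y (f x').
Proof.
move=> homo_f lift_f rec_x' y /(connect_lift lift_f)[y' <- /rec_x'].
exact: connect_homo.
Qed.

End RelationProjection.

Section StochasticMatrices.
Variable R : realType.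
Implicit Types Q : finType.

Lemma cvg_sumr (I : finType) (u : I -> nat -> R) (l : I -> R) :
  (forall i, u i @ \oo --> l i) ->
  (fun n => \sum_i u i n) @ \oo --> \sum_i l i.
Proof. by move=> u_l; apply: cvg_big => // z; exact: add_continuous. Qed.

Definition stochastic Q (M : mx R Q) :=
  (forall s t, 0 <= M s t) /\ (forall s, \sum_t M s t = 1).

Lemma stochastic_id Q : stochastic (@mxid R Q).
Proof.
split=> [s t|s]; first by rewrite /mxid ler0n.
rewrite /mxid (bigD1 s) //= eqxx big1 ?addr0 // => t tNs.
by rewrite eq_sym (negbTE tNs).
Qed.

Lemma stochastic_mul Q (M N : mx R Q) :
  stochastic M -> stochastic N -> stochastic (mxmul M N).
Proof.
move=> [M_ge0 M_sum] [N_ge0 N_sum]; split=> [s t|s].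
  by apply: sumr_ge0 => r _; rewrite mulr_ge0.
rewrite /mxmul exchange_big /= -(M_sum s); apply: eq_bigr => r _.
by rewrite -mulr_sumr N_sum mulr1.
Qed.

Lemma stochastic_row_gt0 Q (M : mx R Q) s :
  stochastic M -> exists t, 0 < M s t.
Proof.
move=> [M_ge0 M_sum]; case: (pickP (fun t => 0 < M s t)) => [t|M_s0].
  by exists t.
have : \sum_t M s t = 0.
  by apply: big1 => t _; apply/eqP; rewrite eq_le M_ge0 andbT leNgt M_s0.
by rewrite M_sum => /eqP; rewrite oner_eq0.
Qed.

Lemma stochastic_lim Q (W : nat -> mx R Q) (M : mx R Q) :
  (forall n, stochastic (W n)) ->
  (forall s t, (fun n => W n s t) @ \oo --> M s t) -> stochastic M.
Proof.
move=> W_st W_M; split=> [s t|s].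
  apply: (ler_cvg_to (cvg_cst 0) (W_M s t)); apply: nearW => n.
  by case: (W_st n).
have sum_M : (fun n => \sum_t W n s t) @ \oo --> \sum_t M s t.
  exact: cvg_sumr.
have sum_1 : (fun n => \sum_t W n s t) @ \oo --> (1 : R).
  rewrite (_ : (fun n => _) = fun=> 1); first exact: cvg_cst.
  by apply: funext => n; case: (W_st n) => _ ->.
exact: (cvg_unique _ sum_M sum_1).
Qed.

Definition kron Q1 Q2 (M1 : mx R Q1) (M2 : mx R Q2) : mx R (Q1 * Q2)%type :=
  fun x y => M1 x.1 y.1 * M2 x.2 y.2.

Lemma kron_mul Q1 Q2 (M1 N1 : mx R Q1) (M2 N2 : mx R Q2) :
  mxmul (kron M1 M2) (kron N1 N2) = kron (mxmul M1 N1) (mxmul M2 N2).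
Proof.
apply: funext => x; apply: funext => y.
rewrite /mxmul /kron big_distrlr /= pair_big /=.
by apply: eq_bigr => z _; rewrite mulrACA.
Qed.

Lemma kron_gt0 Q1 Q2 (M1 : mx R Q1) (M2 : mx R Q2) x y :
  stochastic M1 -> stochastic M2 ->
  (0 < kron M1 M2 x y) = (0 < M1 x.1 y.1) && (0 < M2 x.2 y.2).
Proof.
move=> [M1_ge0 _] [M2_ge0 _]; rewrite /kron.
have [M1_0|M1_gt0] := eqVneq (M1 x.1 y.1) 0; first by rewrite M1_0 mul0r ltxx.
have [M2_0|M2_gt0] := eqVneq (M2 x.2 y.2) 0; first by rewrite M2_0 mulr0 ltxx andbF.
by rewrite !lt_def M1_gt0 M2_gt0 mulf_neq0 ?M1_ge0 ?M2_ge0 ?mulr_ge0.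
Qed.

Section KronFactors.
Variables (Q1 Q2 : finType) (M1 : mx R Q1) (M2 : mx R Q2).
Hypotheses (M1_st : stochastic M1) (M2_st : stochastic M2).

Let M1M1_st := stochastic_mul M1_st M1_st.
Let M2M2_st := stochastic_mul M2_st M2_st.

Lemma idempotent_kron_l (x2 : Q2) :
  Defs.idempotent (kron M1 M2) -> Defs.idempotent M1.
Proof.
rewrite /Defs.idempotent kron_mul => idK s t; split=> st_gt0.
  have [y2 y2_gt0] := stochastic_row_gt0 x2 M2_st.
  have := (idK (s, x2) (t, y2)).1.
  by rewrite !kron_gt0 //= st_gt0 y2_gt0 => /(_ isT)/andP[].
have [y2 y2_gt0] := stochastic_row_gt0 x2 M2M2_st.
have := (idK (s, x2) (t, y2)).2.
by rewrite !kron_gt0 //= st_gt0 y2_gt0 => /(_ isT)/andP[].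
Qed.

Lemma idempotent_kron_r (x1 : Q1) :
  Defs.idempotent (kron M1 M2) -> Defs.idempotent M2.
Proof.
rewrite /Defs.idempotent kron_mul => idK s t; split=> st_gt0.
  have [y1 y1_gt0] := stochastic_row_gt0 x1 M1_st.
  have := (idK (x1, s) (y1, t)).1.
  by rewrite !kron_gt0 //= st_gt0 y1_gt0 => /(_ isT)/andP[].
have [y1 y1_gt0] := stochastic_row_gt0 x1 M1M1_st.
have := (idK (x1, s) (y1, t)).2.
by rewrite !kron_gt0 //= st_gt0 y1_gt0 => /(_ isT)/andP[].
Qed.

Lemma recurrent_kron_l x : recurrent (kron M1 M2) x -> recurrent M1 x.1.
Proof.
move=> rec_x; apply: (recurrent_proj (f := fst) _ _ rec_x) => [y z|y' z].
  by rewrite /mx_rel kron_gt0 // => /andP[].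
have [z2 z2_gt0] := stochastic_row_gt0 y'.2 M2_st.
by rewrite /mx_rel => z_gt0; exists (z, z2); rewrite // /mx_rel kron_gt0 //= z_gt0 z2_gt0.
Qed.

Lemma recurrent_kron_r x : recurrent (kron M1 M2) x -> recurrent M2 x.2.
Proof.
move=> rec_x; apply: (recurrent_proj (f := snd) _ _ rec_x) => [y z|y' z].
  by rewrite /mx_rel kron_gt0 // => /andP[].
have [z1 z1_gt0] := stochastic_row_gt0 y'.1 M1_st.
by rewrite /mx_rel => z_gt0; exists (z1, z); rewrite // /mx_rel kron_gt0 //= z_gt0 z1_gt0.
Qed.

End KronFactors.

Definition mx_leak Q (W : nat -> mx R Q) : Prop :=
  (forall n, Defs.idempotent (W n)) /\
  exists M : mx R Q,
    (forall s t, (fun n => W n s t) @ \oo --> M s t) /\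
    Defs.idempotent M /\
    exists r q : Q, recurrent M r /\ recurrent M q /\
      (fun n => W n r q) @ \oo --> (0 : R) /\ (forall n, 0 < W n r q).

Section KronSequences.
Variables (Q1 Q2 : finType) (W1 : nat -> mx R Q1) (W2 : nat -> mx R Q2).
Hypotheses (W1_st : forall n, stochastic (W1 n))
           (W2_st : forall n, stochastic (W2 n)).
Variable M : mx R (Q1 * Q2)%type.
Hypothesis W_M :
  forall x y, (fun n => kron (W1 n) (W2 n) x y) @ \oo --> M x y.

Lemma cvg_kron_l (x2 : Q2) s t :
  (fun n => W1 n s t) @ \oo --> \sum_t2 M (s, x2) (t, t2).
Proof.
rewrite (_ : (fun n => _) = fun n => \sum_t2 kron (W1 n) (W2 n) (s, x2) (t, t2)).
  exact: cvg_sumr.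
apply: funext => n; rewrite /kron /= -mulr_sumr.
by case: (W2_st n) => _ ->; rewrite mulr1.
Qed.

Lemma cvg_kron_r (x1 : Q1) s t :
  (fun n => W2 n s t) @ \oo --> \sum_t1 M (x1, s) (t1, t).
Proof.
rewrite (_ : (fun n => _) = fun n => \sum_t1 kron (W1 n) (W2 n) (x1, s) (t1, t)).
  exact: cvg_sumr.
apply: funext => n; rewrite /kron /= -mulr_suml.
by case: (W1_st n) => _ ->; rewrite mul1r.
Qed.

Lemma lim_kron (M1 : mx R Q1) (M2 : mx R Q2) :
  (forall s t, (fun n => W1 n s t) @ \oo --> M1 s t) ->
  (forall s t, (fun n => W2 n s t) @ \oo --> M2 s t) -> M = kron M1 M2.
Proof.
move=> W1_M1 W2_M2; apply: funext => x; apply: funext => y.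
exact: (cvg_unique _ (@W_M x y) (cvgM (W1_M1 x.1 y.1) (W2_M2 x.2 y.2))).
Qed.

End KronSequences.

Lemma mx_leak_kron Q1 Q2 (W1 : nat -> mx R Q1) (W2 : nat -> mx R Q2) :
  (forall n, stochastic (W1 n)) -> (forall n, stochastic (W2 n)) ->
  mx_leak (fun n => kron (W1 n) (W2 n)) -> mx_leak W1 \/ mx_leak W2.
Proof.
move=> W1_st W2_st [idW [M [W_M [idM [r [q [rec_r [rec_q [Wrq_0 Wrq_gt0]]]]]]]]].
pose M1 s t := \sum_t2 M (s, r.2) (t, t2).
pose M2 s t := \sum_t1 M (r.1, s) (t1, t).
have W1_M1 : forall s t, (fun n => W1 n s t) @ \oo --> M1 s t.
  exact: cvg_kron_l.
have W2_M2 : forall s t, (fun n => W2 n s t) @ \oo --> M2 s t.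
  exact: cvg_kron_r.
have M1_st := stochastic_lim W1_st W1_M1.
have M2_st := stochastic_lim W2_st W2_M2.
have M_kron := lim_kron W_M W1_M1 W2_M2.
have Mrq_0 : kron M1 M2 r q = 0 by rewrite -M_kron; apply: cvg_unique (W_M r q) Wrq_0.
rewrite {}M_kron in idM rec_r rec_q.
have Wrq n : (0 < W1 n r.1 q.1) && (0 < W2 n r.2 q.2) by rewrite -kron_gt0.
move/eqP: Mrq_0; rewrite mulf_eq0 => /orP[/eqP M1rq_0|/eqP M2rq_0].
- left; split=> [n|]; first exact: idempotent_kron_l (W1_st n) (W2_st n) r.2 (idW n).
  exists M1; split=> //; split; first exact: idempotent_kron_l M1_st M2_st r.2 idM.
  exists r.1, q.1; split; first exact: recurrent_kron_l M1_st M2_st _ rec_r.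
  split; first exact: recurrent_kron_l M1_st M2_st _ rec_q.
  by split=> [|n]; [rewrite -M1rq_0 | case/andP: (Wrq n)].
- right; split=> [n|]; first exact: idempotent_kron_r (W1_st n) (W2_st n) r.1 (idW n).
  exists M2; split=> //; split; first exact: idempotent_kron_r M1_st M2_st r.1 idM.
  exists r.2, q.2; split; first exact: recurrent_kron_r M1_st M2_st _ rec_r.
  split; first exact: recurrent_kron_r M1_st M2_st _ rec_q.
  by split=> [|n]; [rewrite -M2rq_0 | case/andP: (Wrq n)].
Qed.

End StochasticMatrices.

Section ProductAutomaton.
Variables (R : realType) (A : finType).

Lemma stochastic_word_mx (P : pa R A) u : stochastic (@word_mx _ _ P u).
Proof.
elim: u => [|a u IHu] /=; first exact: stochastic_id.
apply: stochastic_mul IHu; split=> [s t|s]; [exact: pa_delta_ge0 | exact: pa_delta_sum].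
Qed.

Lemma word_mx_prod (P1 P2 : pa R A) u :
  @word_mx _ _ (prod_pa P1 P2) u = kron (@word_mx _ _ P1 u) (@word_mx _ _ P2 u).
Proof.
elim: u => [|a u IHu] /=; last by rewrite IHu -kron_mul.
apply: funext => -[x1 x2]; apply: funext => -[y1 y2].
by rewrite /mxid /kron /= xpair_eqE -natrM mulnb.
Qed.

End ProductAutomaton.

Theorem proposition5p2 (R : realType) (A : finType) (P1 P2 : pa R A) :
  leaktight P1 -> leaktight P2 -> leaktight (prod_pa P1 P2).
Proof.
move=> tight1 tight2 u.
change (~ mx_leak (fun n => @word_mx _ _ (prod_pa P1 P2) (u n))).
rewrite (_ : (fun n => _) = fun n => kron (@word_mx _ _ P1 (u n)) (@word_mx _ _ P2 (u n))).
  by case/mx_leak_kron=> [n|n|/tight1|/tight2] //; exact: stochastic_word_mx.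
by apply: funext => n; rewrite word_mx_prod.
Qed.
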